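(* Let $p$ be an odd prime. In the group $H = \langle a,b : a[a^p,b],\ b^p\rangle$, the element $a$ is nontrivial.
   Context: Commutator convention: $[x,y]=x^{-1}y^{-1}xy$, so $[a^p,b]=a^{-p}b^{-1}a^pb$. *)

From HB Require Import structures.
From mathcomp Require Import all_boot.
Set Implicit Arguments. Unset Strict Implicit. Unset Printing Implicit Defensive.

Inductive letter := LA | LAi | LB | LBi.

Definition letter_code (x : letter) : nat :=
  match x with LA => 0 | LAi => 1 | LB => 2 | LBi => 3 end.
Definition letter_decode (n : nat) : letter :=
  match n with 0 => LA | 1 => LAi | 2 => LB | _ => LBi end.
Lemma letter_codeK : cancel letter_code letter_decode.
Proof. by case. Qed.
HB.instance Definition _ := Equality.copy letter (can_type letter_codeK).

Definition linv (x : letter) : letter :=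
  match x with LA => LAi | LAi => LA | LB => LBi | LBi => LB end.

Definition word := seq letter.

Definition winv (w : word) : word := rev (map linv w).

Fixpoint wpow (w : word) (n : nat) : word :=
  match n with 0 => [::] | n'.+1 => w ++ wpow w n' end.

Definition wcomm (x y : word) : word := winv x ++ winv y ++ x ++ y.

Definition relators (p : nat) : seq word :=
  [:: [:: LA] ++ wcomm (wpow [:: LA] p) [:: LB]; wpow [:: LB] p].

(* Equality of words in H = <a,b | a[a^p,b], b^p>: the equivalence relation
   generated by deleting (or, by symmetry, inserting) a cancelling pair x x^-1
   or a relator anywhere inside a word. *)
Inductive Heq (p : nat) : word -> word -> Prop :=
| Heq_refl w : Heq p w w
| Heq_sym u v : Heq p u v -> Heq p v u
| Heq_trans u v w : Heq p u v -> Heq p v w -> Heq p u w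
| Heq_free u v x : Heq p (u ++ x :: linv x :: v) (u ++ v)
| Heq_rel u v r : r \in relators p -> Heq p (u ++ r ++ v) (u ++ v).

(* A word acts on a set once each letter is sent to a map and mutually inverse
   letters to mutually inverse maps; this action is invariant under [Heq] as
   soon as both relators act trivially.  Send a to [x |-> 1 + x] and b to
   [x |-> k * x] on the ring 'Z_n with n = p^p - (p-1)^p and k = (p-1)/p: the
   relator a[a^p,b] acts as [x |-> x + 1 - p + p k] = id, and b^p acts as
   multiplication by k^p = (p-1)^p / p^p = 1 since n kills p^p - (p-1)^p.
   As a moves 0 to 1 <> 0, it is not trivial in H. *)
From mathcomp Require Import all_boot all_algebra.
From mathcomp Require Import ring.

Set Implicit Arguments.
Unset Strict Implicit.
Unset Printing Implicit Defensive.

Import GRing.Theory.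
Local Open Scope ring_scope.

Section WordAction.
Variables (T : Type) (f : letter -> T -> T).

Definition wact (w : word) (x : T) : T := foldl (fun y l => f l y) x w.

Lemma wact_cat u v x : wact (u ++ v) x = wact v (wact u x).
Proof. by rewrite /wact foldl_cat. Qed.

Lemma wact_nseq m l x : wact (nseq m l) x = iter m (f l) x.
Proof. by elim: m x => [|m IHm] x //=; rewrite IHm -iterS iterSr. Qed.

Hypothesis f_linvK : forall l, cancel (f l) (f (linv l)).

Lemma wact_Heq p u v :
  (forall r, r \in relators p -> wact r =1 id) -> Heq p u v -> wact u =1 wact v.
Proof.
move=> rel_id; elim=> {u v}.
- by move=> w x.
- by move=> u v _ IH x; rewrite IH.
- by move=> u v w _ IHuv _ IHvw x; rewrite IHuv IHvw.
- by move=> u v l x; rewrite !wact_cat /= f_linvK.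
- by move=> u v r r_rel x; rewrite !wact_cat (rel_id _ r_rel).
Qed.

End WordAction.

Lemma wpow_letter m l : wpow [:: l] m = nseq m l.
Proof. by elim: m => //= m ->. Qed.

Lemma winv_nseq m l : winv (nseq m l) = nseq m (linv l).
Proof. by rewrite /winv map_nseq rev_nseq. Qed.

Section AffineAction.
Variables (R : comUnitRingType) (k : R).

Definition affine_act (l : letter) : R -> R :=
  match l with LA => +%R 1 | LAi => +%R (-1) | LB => *%R k | LBi => *%R k^-1 end.

Hypothesis k_unit : k \is a GRing.unit.

Lemma affine_actK l : cancel (affine_act l) (affine_act (linv l)).
Proof.
case: l => x /=; [exact: addKr | exact: addNKr | exact: mulKr | exact: mulVKr].
Qed.

Lemma wact_affine_rel_comm p x :
  wact affine_act ([:: LA] ++ wcomm (wpow [:: LA] p) [:: LB]) x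
  = k * p%:R - p%:R + 1 + x.
Proof.
rewrite /wcomm !wpow_letter !winv_nseq /= !wact_cat !wact_nseq /=.
rewrite !wact_cat wact_nseq /= !iter_addr mulrDr mulVKr //.
by rewrite mulNrn; ring.
Qed.

Lemma wact_affine_rel_pow p x : wact affine_act (wpow [:: LB] p) x = k ^+ p * x.
Proof. by rewrite wpow_letter wact_nseq iter_mulr. Qed.

End AffineAction.

Lemma affine_a_nontrivial (R : comUnitRingType) (p : nat) (k : R) :
  (0 < p)%N -> k * p%:R = p.-1%:R -> k ^+ p = 1 -> ~ Heq p [:: LA] [::].
Proof.
move=> p_gt0 kp kX heq.
have k_unit : k \is a GRing.unit by rewrite -(unitrX_pos _ p_gt0) kX unitr1.
have p_pred : p%:R = p.-1%:R + 1 :> R by rewrite natr1 (prednK p_gt0).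
have rel_id r : r \in relators p -> wact (affine_act k) r =1 id.
  rewrite !inE => /orP[] /eqP -> x.
  - by rewrite (wact_affine_rel_comm k_unit) kp p_pred; ring.
  - by rewrite wact_affine_rel_pow kX mul1r.
have := wact_Heq (affine_actK k_unit) rel_id heq 0.
by rewrite /= addr0 => /eqP; rewrite oner_eq0.
Qed.

Lemma subn_expSX_gt1 b e : (0 < b)%N -> (0 < e)%N -> (1 < b.+1 ^ e.+1 - b ^ e.+1)%N.
Proof.
move=> b_gt0 e_gt0; rewrite ltn_subRL.
have le_bX : (b ^ e.+1 <= b * b.+1 ^ e)%N by rewrite expnS leq_mul // leq_exp2r.
have gt1_bSX : (1 < b.+1 ^ e)%N by rewrite -(exp1n e) ltn_exp2r // ltnS.
by rewrite [(b.+1 ^ _)%N]expnS mulSn addn1 -add2n leq_add.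
Qed.

Lemma coprime_subn_expSX b e : coprime (b.+1 ^ e.+1 - b ^ e.+1) b.+1.
Proof.
set n := (b.+1 ^ e.+1 - b ^ e.+1)%N; set d := gcdn n b.+1.
have d_bX : (d %| b ^ e.+1)%N.
  have -> : (b ^ e.+1 = b.+1 ^ e.+1 - n)%N by rewrite subKn // leq_exp2r.
  rewrite dvdn_sub ?dvdn_gcdl //.
  by rewrite (dvdn_trans (dvdn_gcdr _ _)) // dvdn_exp.
have cop_bX : coprime b.+1 (b ^ e.+1) by rewrite coprimeXr // coprimeSn.
by rewrite /coprime -dvdn1 -(eqP cop_bX) dvdn_gcd dvdn_gcdr d_bX.
Qed.

Section GapRoot.
Variables b e : nat.
Hypotheses (b_gt0 : (0 < b)%N) (e_gt0 : (0 < e)%N).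
Local Notation n := (b.+1 ^ e.+1 - b ^ e.+1)%N.

Definition gap_root : 'Z_n := b%:R / b.+1%:R.

Lemma gap_base_unit : b.+1%:R \is a @GRing.unit 'Z_n.
Proof. by rewrite unitZpE ?subn_expSX_gt1 // coprime_subn_expSX. Qed.

Lemma gap_root_mul : gap_root * b.+1%:R = b%:R.
Proof. by rewrite divrK // gap_base_unit. Qed.

Lemma gap_rootX : gap_root ^+ e.+1 = 1.
Proof.
have n_gt1 := subn_expSX_gt1 b_gt0 e_gt0.
have eqX : b.+1%:R ^+ e.+1 = b%:R ^+ e.+1 :> 'Z_n.
  have le_X : (b ^ e.+1 <= b.+1 ^ e.+1)%N by rewrite leq_exp2r.
  have n_vanish : (n + b ^ e.+1)%:R = (b ^ e.+1)%:R :> 'Z_n.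
    by rewrite natrD pchar_Zp // add0r.
  by rewrite -!natrX -n_vanish subnK.
by rewrite /gap_root exprMn exprVn -eqX mulrV // unitrX // gap_base_unit.
Qed.

End GapRoot.

Theorem mainTheorem10 (p : nat) (hp : prime p) (hodd : odd p) :
  ~ Heq p [:: LA] [::].
Proof.
move: (prime_gt1 hp); case: p hp hodd => [|[|m]] // _ _ _.
apply: (@affine_a_nontrivial _ _ (gap_root m.+1 m.+1)) => //.
- exact: gap_root_mul.
- exact: gap_rootX.
Qed.
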